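(* In the setting of the context, let $h_0=\max\{y\ge0:\frac{p(m-\sqrt m)}{1-p}\ge yp+\sqrt y\}$, $\beta=0.4215\cdot\frac{p^2+(1-p)^2}{p(1-p)}$, $h_1=h_0(1-p)-\sqrt{p(1-p)h_0}-\frac{\beta}{\sqrt{h_0}}$, and $\overline{\mathcal R_2}=\{(h,\ell):h\ge\max\{h_0,\sqrt m\},\ \ell<\sqrt m\}$. Then $$\inf_{(h,\ell)\in\overline{\mathcal R_2}}\mathbb E_{\mathbf n}\Big[\frac{\mathrm{REW}_A(\mathbf n,\rho;\mathcal G)}{\mathrm{OPT}(\mathbf n)}\Big]\ge\min\Big\{1-\frac1{\sqrt m},\ \frac{h_1}{m}\Big\}.$$
   Context: Setting: $m$ units of a divisible resource; two agent types with mean rewards $r_1>r_2$ in $(0,1)$; integers $h,\ell\ge0$ chosen adversarially; sampling probability $p\in(0,1)$; $s_1\sim\mathrm{Bin}(h,p)$, $s_2\sim\mathrm{Bin}(\ell,p)$ independent; $\mathbf n=(n_1,n_2)=(h-s_1,\ell-s_2)$; $\mathbb E_{\mathbf n}$ denotes expectation over this sampling. $\mathrm{OPT}(\mathbf n)=r_1\min\{n_1,m\}+r_2\min\{n_2,(m-n_1)^+\}$. The algorithm considered protects type 1 with protection level derived from $s_1$ (the case of the ''good event'' $\hat r_1>\hat r_2$, where $\hat r_i$ are empirical mean rewards of sampled agents) on the ordered sequence in which the $n_2$ type 2 agents arrive before the $n_1$ type 1 agents; its reward is $$\mathrm{REW}_A(\mathbf n,\rho;\mathcal G)=\min\Big\{n_2,\Big(m-\tfrac{1-p}{p}s_1\Big)^+\Big\}r_2+\min\Big\{m-\min\Big\{n_2,\Big(m-\tfrac{1-p}{p}s_1\Big)^+\Big\},\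 n_1\Big\}r_1.$$ *)

From HB Require Import structures.
From mathcomp Require Import all_boot all_order all_algebra.
From mathcomp Require Import reals.
Set Implicit Arguments. Unset Strict Implicit. Unset Printing Implicit Defensive.
Import Order.TTheory GRing.Theory Num.Theory.
Local Open Scope ring_scope.

Section Defs.
Variable R : realType.

Definition pos_part (x : R) : R := Num.max x 0.

Definition OPT (m r1 r2 : R) (n1 n2 : nat) : R :=
  r1 * Num.min n1%:R m + r2 * Num.min n2%:R (pos_part (m - n1%:R)).

Definition alloc2 (m p : R) (s1 n2 : nat) : R :=
  Num.min n2%:R (pos_part (m - (1 - p) / p * s1%:R)).

Definition REW (m p r1 r2 : R) (s1 n1 n2 : nat) : R :=
  alloc2 m p s1 n2 * r2 + Num.min (m - alloc2 m p s1 n2) n1%:R * r1.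

(* ratio REW/OPT, with the convention 0/0 := 1 (OPT = 0 only when no agent
   remains, in which case the algorithm is trivially optimal) *)
Definition ratio (m p r1 r2 : R) (s1 n1 n2 : nat) : R :=
  if OPT m r1 r2 n1 n2 == 0 then 1
  else REW m p r1 r2 s1 n1 n2 / OPT m r1 r2 n1 n2.

Definition binom_pmf (n : nat) (p : R) (k : nat) : R :=
  'C(n, k)%:R * p ^+ k * (1 - p) ^+ (n - k).

(* E_n[ REW/OPT ] where s1 ~ Bin(h,p), s2 ~ Bin(l,p) independent,
   n = (h - s1, l - s2) *)
Definition exp_ratio (m p r1 r2 : R) (h l : nat) : R :=
  \sum_(s1 < h.+1) \sum_(s2 < l.+1)
     binom_pmf h p s1 * binom_pmf l p s2 *
     ratio m p r1 r2 s1 (h - s1) (l - s2).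

End Defs.

From Pilot Require Import Defs.
From HB Require Import structures.
From mathcomp Require Import all_boot all_order all_algebra.
From mathcomp Require Import reals.
From mathcomp Require Import ring lra.
Set Implicit Arguments. Unset Strict Implicit. Unset Printing Implicit Defensive.
Import Order.TTheory GRing.Theory Num.Theory.
Local Open Scope ring_scope.

(* Since [t := h0 (1 - p) <= m - sqrt m] and [n2 <= l < sqrt m], the
   allocation always leaves at least [min(t, n1)] units to type 1, so that
   [REW / OPT >= min(t, n1) / m] pointwise.  With [n1 = h - s1] and
   [s1 ~ Bin(h, p)], bound [min(t, x)] below by the parabola
   [t - (t - x + e)^2 / (4 e)] touching it; its expectation only involves the
   mean and variance [sigma^2 = h p (1 - p)] of [s1], and the choice
   [e = sigma + (h - h0)(1 - p)] gives [E min(t, n1) >= t - sigma^2 / (2 e)].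
   An elementary two-case estimate bounds [sigma^2 / (2 e)] by
   [sqrt (p (1 - p) h0) + beta / sqrt h0] as soon as [beta >= p / (18 (1 - p))],
   which the paper's Berry-Esseen-based [beta] satisfies with room to spare.  Hence
   [E[REW / OPT] >= h1 / m]; only the feasibility of [h0], not its
   maximality, is used. *)

Lemma le_min_quadratic (R : realFieldType) (t x e : R) :
  0 < e -> t - (t - x + e) ^+ 2 / (4 * e) <= Num.min t x.
Proof.
move=> e_gt0; have e4_gt0 : 0 < 4 * e by rewrite mulr_gt0.
have Q_ge0 : 0 <= (t - x + e) ^+ 2 / (4 * e) by rewrite divr_ge0 ?sqr_ge0 ?ltW.
have : t - x <= (t - x + e) ^+ 2 / (4 * e).
  by rewrite ler_pdivlMr //; have := sqr_ge0 (t - x - e); nra.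
set Q := _ / (4 * e) in Q_ge0 *; move=> le_Q.
by rewrite le_min; apply/andP; split; lra.
Qed.

Section Binomial.
Variable R : realType.
Implicit Types (p c : R) (n k : nat).

Lemma binom_pmf_ge0 n p k : 0 <= p <= 1 -> 0 <= binom_pmf n p k.
Proof.
by case/andP=> p0 p1; rewrite /binom_pmf !mulr_ge0 ?exprn_ge0 ?subr_ge0.
Qed.

Lemma sum_binom_pmf n p : \sum_(k < n.+1) binom_pmf n p k = 1.
Proof.
have := exprDn (1 - p) p n; rewrite subrK expr1n => ->.
by apply: eq_bigr => k _; rewrite /binom_pmf -mulr_natl; ring.
Qed.

Lemma sum_natr_mul_binom_pmfS n p (F : nat -> R) :
  \sum_(k < n.+2) k%:R * F k * binom_pmf n.+1 p k =
  n.+1%:R * p * \sum_(k < n.+1) F k.+1 * binom_pmf n p k.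
Proof.
rewrite big_ord_recl /= !mul0r add0r big_distrr; apply: eq_bigr => k _.
rewrite /binom_pmf /bump /= add1n subSS exprS.
have binS : (k.+1%:R * 'C(n.+1, k.+1)%:R : R) = n.+1%:R * 'C(n, k)%:R.
  by rewrite -!natrM mul_bin_diag.
transitivity (k.+1%:R * 'C(n.+1, k.+1)%:R * F k.+1 * (p * p ^+ k) * (1 - p) ^+ (n - k)).
  by ring.
by rewrite binS; ring.
Qed.

Lemma binom_mean n p : \sum_(k < n.+1) k%:R * binom_pmf n p k = n%:R * p.
Proof.
case: n => [|n]; first by rewrite big_ord1 !mul0r.
have := sum_natr_mul_binom_pmfS n p (fun _ => 1).
under eq_bigr do rewrite mulr1.
by move=> ->; under eq_bigr do rewrite mul1r; rewrite sum_binom_pmf mulr1.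
Qed.

Lemma binom_second_moment n p :
  \sum_(k < n.+1) k%:R ^+ 2 * binom_pmf n p k = n%:R * p * (1 - p) + (n%:R * p) ^+ 2.
Proof.
case: n => [|n]; first by rewrite big_ord1 !mul0r expr0n mul0r addr0.
have := sum_natr_mul_binom_pmfS n p (fun k => k%:R).
under eq_bigr do rewrite -expr2.
move=> ->; under eq_bigr do rewrite -addn1 natrD mulrDl mul1r.
by rewrite big_split /= binom_mean sum_binom_pmf -addn1 natrD; ring.
Qed.

Lemma binom_sq_dev n p c :
  \sum_(k < n.+1) binom_pmf n p k * (k%:R - c) ^+ 2 =
  n%:R * p * (1 - p) + (n%:R * p - c) ^+ 2.
Proof.
transitivity (\sum_(k < n.+1) k%:R ^+ 2 * binom_pmf n p k
   - 2 * c * \sum_(k < n.+1) k%:R * binom_pmf n p k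
   + c ^+ 2 * \sum_(k < n.+1) binom_pmf n p k).
  rewrite !big_distrr -sumrB -big_split; apply: eq_bigr => k _ /=; ring.
by rewrite binom_second_moment binom_mean sum_binom_pmf; ring.
Qed.

Lemma binom_expect_min_ge n p t e : 0 <= p <= 1 -> 0 < e ->
  t - (n%:R * p * (1 - p) + (t - n%:R * (1 - p) + e) ^+ 2) / (4 * e) <=
  \sum_(k < n.+1) binom_pmf n p k * Num.min t (n - k)%:R.
Proof.
move=> p01 e_gt0; set c := n%:R - t - e.
have -> : t - (n%:R * p * (1 - p) + (t - n%:R * (1 - p) + e) ^+ 2) / (4 * e) =
    \sum_(k < n.+1) binom_pmf n p k * (t - (k%:R - c) ^+ 2 / (4 * e)).
  under eq_bigr do rewrite mulrBr.
  rewrite sumrB -big_distrl /= sum_binom_pmf mul1r.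
  under eq_bigr do rewrite mulrA.
  by rewrite -big_distrl binom_sq_dev /c; congr (_ - _ / _); ring.
apply: ler_sum => k _; rewrite ler_wpM2l ?binom_pmf_ge0 //.
have k_le : (k <= n)%N by rewrite -ltnS.
rewrite natrB // (_ : k%:R - c = t - (n%:R - k%:R) + e) /c; last ring.
exact: le_min_quadratic.
Qed.

End Binomial.

Lemma var_ratio_le_poly (R : realFieldType) (p q w s S V : R) :
  0 < p -> 0 < q -> w ^+ 2 = p * q -> 0 <= w -> 0 < s <= S -> 0 <= V ->
  p ^+ 2 <= 9 * (w * s * V) ->
  S ^+ 2 * w ^+ 2 <= (w * s + V) * (2 * (S * w + (S ^+ 2 - s ^+ 2) * q)).
Proof.
move=> p_gt0 q_gt0 w2 w_ge0 /andP[s_gt0 s_le] V_ge0 pV.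
have gap_ge0 : 0 <= (S ^+ 2 - s ^+ 2) * q.
  by apply: mulr_ge0; [rewrite subr_ge0; nra | exact: ltW].
have S_gt0 : 0 < S := lt_le_trans s_gt0 s_le.
have ws_ge0 : 0 <= w * s by rewrite mulr_ge0 // ltW.
have Sw_ge0 : 0 <= S * w by rewrite mulr_ge0 // ltW.
(* If [S <= 2 s] the term [w s * 2 S w] alone suffices; otherwise AM-GM gives
   [w s + V >= 2 p / 3] while the gap term is at least [3/4 S^2 q]. *)
case: (lerP S (2 * s)) => [S_le|S_gt].
  have : 0 <= S * w ^+ 2 * (2 * s - S) by rewrite !mulr_ge0 ?sqr_ge0 ?subr_ge0 // ltW.
  have := mulr_ge0 ws_ge0 gap_ge0; have := mulr_ge0 V_ge0 (addr_ge0 Sw_ge0 gap_ge0).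
  nra.
have sum_ge : 2 * p / 3 <= w * s + V.
  have : (2 * p / 3) ^+ 2 <= (w * s + V) ^+ 2 by have := sqr_ge0 (w * s - V); nra.
  by rewrite ler_pXn2r // ?nnegrE ?addr_ge0 // divr_ge0 // mulr_ge0 // ltW.
have fac_ge : 3 / 2 * S ^+ 2 * q <= 2 * (S * w + (S ^+ 2 - s ^+ 2) * q).
  have : 4 * s ^+ 2 <= S ^+ 2 by have := ltW S_gt; nra.
  by nra.
rewrite w2 (_ : S ^+ 2 * (p * q) = 2 * p / 3 * (3 / 2 * S ^+ 2 * q)); last by field.
by apply: ler_pM => //; apply: mulr_ge0; rewrite ?mulr_ge0 ?sqr_ge0 //; lra.
Qed.

Lemma var_ratio_le (R : rcfType) (p h0 H beta : R) :
  0 < p < 1 -> 0 < h0 <= H -> p ^+ 2 <= 18 * (p * (1 - p)) * beta ->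
  H * p * (1 - p) / (2 * (Num.sqrt (H * p * (1 - p)) + (H - h0) * (1 - p))) <=
  Num.sqrt (p * (1 - p) * h0) + beta / Num.sqrt h0.
Proof.
move=> /andP[p_gt0 p_lt1] /andP[h0_gt0 h0_le] p_beta.
have q_gt0 : 0 < 1 - p by rewrite subr_gt0.
have pq_gt0 : 0 < p * (1 - p) by rewrite mulr_gt0.
have H_gt0 : 0 < H := lt_le_trans h0_gt0 h0_le.
set w := Num.sqrt (p * (1 - p)); set s := Num.sqrt h0; set S := Num.sqrt H.
have w2 : w ^+ 2 = p * (1 - p) by rewrite sqr_sqrtr // ltW.
have w_gt0 : 0 < w by rewrite sqrtr_gt0.
have s_gt0 : 0 < s by rewrite sqrtr_gt0.
have s_bounds : 0 < s <= S by rewrite s_gt0 ler_sqrt // ltW.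
have w_le : w <= 1 / 2 by have := sqr_ge0 (p - 1 / 2); nra.
have beta_ge0 : 0 <= beta by nra.
have pV : p ^+ 2 <= 9 * (w * s * (beta / s)).
  rewrite (_ : w * s * (beta / s) = w * beta); first by nra.
  by field; rewrite gt_eqF.
have sqrt_Hpq : Num.sqrt (H * p * (1 - p)) = S * w by rewrite -mulrA sqrtrM // ltW.
have sqrt_pqh0 : Num.sqrt (p * (1 - p) * h0) = w * s by rewrite sqrtrM // ltW.
have H_sq : H = S ^+ 2 by rewrite sqr_sqrtr // ltW.
have h0_sq : h0 = s ^+ 2 by rewrite sqr_sqrtr // ltW.
have gap_gt0 : 0 < S * w + (H - h0) * (1 - p).
  by rewrite ltr_wpDr ?mulr_gt0 ?sqrtr_gt0 // mulr_ge0 ?subr_ge0 // ltW.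
rewrite sqrt_Hpq sqrt_pqh0 ler_pdivrMr ?mulr_gt0 //.
rewrite -mulrA -w2 {1 2}H_sq h0_sq.
apply: var_ratio_le_poly p_gt0 q_gt0 w2 (ltW w_gt0) s_bounds _ pV.
by rewrite divr_ge0 // ltW.
Qed.

Lemma binom_expect_min_ge_h1 (R : realType) (n : nat) (p h0 beta : R) :
  0 < p < 1 -> 0 <= h0 <= n%:R -> p ^+ 2 <= 18 * (p * (1 - p)) * beta ->
  h0 * (1 - p) - Num.sqrt (p * (1 - p) * h0) - beta / Num.sqrt h0 <=
  \sum_(k < n.+1) binom_pmf n p k * Num.min (h0 * (1 - p)) (n - k)%:R.
Proof.
move=> p_bounds /andP[+ h0_le] p_beta; have /andP[p_gt0 p_lt1] := p_bounds.
have p01 : 0 <= p <= 1 by rewrite !ltW.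
rewrite le_eqVlt => /predU1P[<-|h0_gt0].
  (* [beta / sqrt 0 = 0]: the bound degenerates to [0]. *)
  rewrite mul0r mulr0 sqrtr0 invr0 mulr0 !subr0.
  by apply: sumr_ge0 => k _; rewrite mulr_ge0 ?binom_pmf_ge0 // le_min lexx ler0n.
set t := h0 * (1 - p); set sigma := Num.sqrt (n%:R * p * (1 - p)).
have npq_gt0 : 0 < n%:R * p * (1 - p).
  by rewrite !mulr_gt0 ?subr_gt0 // (lt_le_trans h0_gt0).
have e_gt0 : 0 < sigma + (n%:R - h0) * (1 - p).
  by rewrite ltr_wpDr ?sqrtr_gt0 // mulr_ge0 ?subr_ge0 // ltW.
apply: le_trans (binom_expect_min_ge n t p01 e_gt0).
rewrite (_ : t - n%:R * (1 - p) + _ = sigma); last by rewrite /t; ring.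
rewrite sqr_sqrtr ?(ltW npq_gt0) //.
rewrite (_ : _ / (4 * _) =
  n%:R * p * (1 - p) / (2 * (sigma + (n%:R - h0) * (1 - p)))).
  have h0_bounds : 0 < h0 <= n%:R by rewrite h0_gt0.
  by have := var_ratio_le p_bounds h0_bounds p_beta; lra.
by field; rewrite gt_eqF.
Qed.

Section Ratio.
Variables (R : realType) (M p r1 r2 : R).
Hypotheses (M_gt0 : 0 < M) (r2_ge0 : 0 <= r2) (r2_lt_r1 : r2 < r1).

Let r1_gt0 : 0 < r1. Proof. exact: le_lt_trans r2_lt_r1. Qed.

Lemma alloc2_ge0 s1 n2 : 0 <= alloc2 M p s1 n2.
Proof. by rewrite /alloc2 /pos_part le_min ler0n le_max lexx orbT. Qed.

Lemma alloc2_le s1 n2 : alloc2 M p s1 n2 <= n2%:R.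
Proof. by rewrite /alloc2 ge_min lexx. Qed.

Lemma OPT_gt0 n1 n2 : OPT M r1 r2 n1 n2 != 0 -> 0 < OPT M r1 r2 n1 n2.
Proof.
rewrite lt_def => ->; rewrite /OPT /pos_part.
have min1_ge0 : 0 <= Num.min n1%:R M by rewrite le_min ler0n ltW.
have min2_ge0 : 0 <= Num.min n2%:R (Num.max (M - n1%:R) 0).
  by rewrite le_min ler0n le_max lexx orbT.
by rewrite addr_ge0 // mulr_ge0 // ltW.
Qed.

Lemma OPT_le n1 n2 : OPT M r1 r2 n1 n2 <= r1 * M.
Proof.
rewrite /OPT /pos_part; have n2_ge0 := ler0n R n2.
case: (lerP n1%:R M) => [n1_le|n1_gt]; last first.
  by rewrite (max_r (ltW _)) ?subr_lt0 // (min_r n2_ge0) mulr0 addr0.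
rewrite (max_l _) ?subr_ge0 //.
have : r2 * (M - n1%:R) <= r1 * (M - n1%:R) by rewrite ler_wpM2r ?subr_ge0 // ltW.
case: (lerP n2%:R (M - n1%:R)) => [n2_le|_]; last by lra.
by have := ler_wpM2l r2_ge0 n2_le; lra.
Qed.

Lemma REW_ge (t : R) (s1 n1 n2 : nat) : t <= M - n2%:R ->
  r1 * Num.min t n1%:R <= REW M p r1 r2 s1 n1 n2.
Proof.
move=> t_le; rewrite /REW mulrC -[X in X <= _]add0r.
apply: lerD; first by rewrite mulr_ge0 ?alloc2_ge0.
rewrite ler_wpM2r ?(ltW r1_gt0) // le_min2 //.
by have := alloc2_le s1 n2; lra.
Qed.

Lemma ratio_ge (t : R) (s1 n1 n2 : nat) : 0 <= t <= M - n2%:R ->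
  Num.min t n1%:R / M <= Defs.ratio M p r1 r2 s1 n1 n2.
Proof.
case/andP=> t_ge0 t_le; have n2_ge0 := ler0n R n2.
have min_ge0 : 0 <= Num.min t n1%:R by rewrite le_min t_ge0 ler0n.
rewrite /Defs.ratio; case: ifPn => [_|/OPT_gt0 OPT_gt0].
  by rewrite ler_pdivrMr // mul1r ge_min; apply/orP; left; lra.
rewrite ler_pdivlMr // mulrAC ler_pdivrMr //.
apply: le_trans (_ : Num.min t n1%:R * (r1 * M) <= _); first by rewrite ler_wpM2l ?OPT_le.
by rewrite mulrA [_ * r1]mulrC ler_wpM2r ?REW_ge // ltW.
Qed.

End Ratio.

Lemma exp_ratio_ge (R : realType) (M p r1 r2 : R) (h l : nat) (g : nat -> R) :
  0 <= p <= 1 ->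
  (forall s1 s2, (s1 <= h)%N -> (s2 <= l)%N ->
     g s1 <= Defs.ratio M p r1 r2 s1 (h - s1) (l - s2)) ->
  \sum_(s1 < h.+1) binom_pmf h p s1 * g s1 <= exp_ratio M p r1 r2 h l.
Proof.
move=> p01 g_le; apply: ler_sum => s1 _.
rewrite -[X in X <= _]mulr1 -(sum_binom_pmf l p) big_distrr /=.
apply: ler_sum => s2 _; rewrite mulrAC; apply: ler_wpM2l.
  by rewrite mulr_ge0 ?binom_pmf_ge0.
by apply: g_le; rewrite -ltnS.
Qed.

Theorem lemma6 (R : realType) (m : nat) (r1 r2 p h0 : R) :
  (0 < m)%N ->
  0 < r2 -> r2 < r1 -> r1 < 1 ->
  0 < p -> p < 1 ->
  (* h0 = max { y >= 0 : p (m - sqrt m) / (1 - p) >= y p + sqrt y } *)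
  0 <= h0 ->
  p * ((m%:R : R) - Num.sqrt (m%:R : R)) / (1 - p) >= h0 * p + Num.sqrt h0 ->
  (forall y : R, 0 <= y ->
     p * ((m%:R : R) - Num.sqrt (m%:R : R)) / (1 - p) >= y * p + Num.sqrt y -> y <= h0) ->
  let beta := 4215 / 10000 * ((p ^+ 2 + (1 - p) ^+ 2) / (p * (1 - p))) in
  let h1 := h0 * (1 - p) - Num.sqrt (p * (1 - p) * h0) - beta / Num.sqrt h0 in
  forall h l : nat,
    Num.max h0 (Num.sqrt (m%:R : R)) <= h%:R ->
    l%:R < Num.sqrt (m%:R : R) ->
    exp_ratio (m%:R : R) p r1 r2 h l >=
      Num.min (1 - 1 / Num.sqrt (m%:R : R)) (h1 / (m%:R : R)).
Proof.
move=> m_gt0 r2_gt0 r2_lt_r1 _ p_gt0 p_lt1 h0_ge0 h0_feasible _ beta h1 h l.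
rewrite ge_max => /andP[h0_le _] l_lt.
set M := (m%:R : R) in h0_feasible l_lt *.
have M_gt0 : 0 < M by rewrite ltr0n.
have q_gt0 : 0 < 1 - p by rewrite subr_gt0.
have t_le : h0 * (1 - p) <= M - Num.sqrt M.
  move: h0_feasible; rewrite ler_pdivlMr // => feasible.
  have : 0 <= Num.sqrt h0 * (1 - p) by rewrite mulr_ge0 ?sqrtr_ge0 ?ltW.
  nra.
have beta_ok : p ^+ 2 <= 18 * (p * (1 - p)) * beta.
  rewrite (_ : _ * beta = 18 * (4215 / 10000) * (p ^+ 2 + (1 - p) ^+ 2)).
    by have := sqr_ge0 (1 - p); have := sqr_ge0 p; lra.
  (* [field] rejects the literal [4215 / 10000], hence the abstraction. *)
  by rewrite /beta; set c := 4215 / 10000; field; rewrite !gt_eqF.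
apply: le_trans (_ : h1 / M <= _); first by rewrite ge_min lexx orbT.
apply: le_trans (exp_ratio_ge (g := fun s1 => Num.min (h0 * (1 - p)) (h - s1)%:R / M) _ _).
- under eq_bigr do rewrite mulrA.
  rewrite -mulr_suml ler_wpM2r ?invr_ge0 ?(ltW M_gt0) //.
  by apply: binom_expect_min_ge_h1 => //; rewrite ?p_gt0 ?p_lt1 ?h0_ge0.
- by rewrite !ltW.
move=> s1 s2 _ s2_le; apply: ratio_ge => //; first exact: ltW.
rewrite mulr_ge0 ?(ltW q_gt0) //=.
have : (l - s2)%:R <= l%:R :> R by rewrite ler_nat leq_subr.
lra.
Qed.
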